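(* Assume the setup in the context and suppose $K\le n-4$. Then $T=K$ on the event $\{\epsilon_1=\epsilon_2=\cdots=\epsilon_K\}$ (which has probability $2^{1-K}$), and $T\ge K+2$ on its complement. Moreover, if $K=n-3$, then still $P(T=K)=2^{1-K}$ and $T\ge K+1$ on the complement of $\{T=K\}$.
   Context: Let $n\ge4$ and let $v_1,\dots,v_n$ be real numbers with $\sum_{i=1}^n v_i^2\le1$ ordered so that $v_n\ge v_1\ge v_{n-1}\ge v_2\ge v_3\ge\cdots\ge v_{n-2}\ge0$. Let $\epsilon_1,\dots,\epsilon_n$ be independent Rademacher random variables ($\pm1$ with probability $\tfrac12$ each). For $t\in\{1,\dots,n-1\}$ put $X_t:=\sum_{i=1}^t v_i\epsilon_i$, and for $t\in\{1,\dots,n\}$ put $M_t:=\sum_{i=1}^t v_i$. Define the random time $T:=\min\big(\{t\le n-1: |X_t|>1-v_{t+1}\}\cup\{n-1\}\big)$ and the deterministic index $K:=\min\big(\{t\le n-1: M_t>1-v_{t+1}\}\cup\{n-1\}\big)$. *)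

From HB Require Import structures.
From mathcomp Require Import all_boot all_order all_algebra.
Set Implicit Arguments. Unset Strict Implicit. Unset Printing Implicit Defensive.
Import Order.TTheory GRing.Theory Num.Theory.
Local Open Scope ring_scope.

(* A sign pattern of (eps_1,...,eps_n) is e : n.-tuple bool; eps_i = +1 iff
   the (i-1)-th entry of e (0-indexed) is true.  The n Rademacher variables
   are independent uniform, so the sample space is the uniform distribution
   on n.-tuple bool. *)
Definition sgn (R : ringType) (b : bool) : R := if b then 1 else -1.

Definition eps (n : nat) (e : n.-tuple bool) (i : nat) : bool := nth false e i.-1.

Definition Xt (R : ringType) (n : nat) (v : nat -> R) (e : n.-tuple bool) (t : nat) : R :=
  \sum_(1 <= i < t.+1) v i * sgn R (eps e i).
Definition Mt (R : ringType) (v : nat -> R) (t : nat) : R :=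
  \sum_(1 <= i < t.+1) v i.

Definition stop_time (n : nat) (P : nat -> bool) : nat :=
  \big[minn/(n - 1)%N]_(1 <= t < n | P t) t.

Definition Ttime (R : realDomainType) (n : nat) (v : nat -> R) (e : n.-tuple bool) : nat :=
  stop_time n (fun t => 1 - v t.+1 < `|Xt v e t|).
Definition Kidx (R : realDomainType) (n : nat) (v : nat -> R) : nat :=
  stop_time n (fun t => 1 - v t.+1 < Mt v t).

Definition first_eq (n K : nat) (e : n.-tuple bool) : bool :=
  all (fun i => eps e i == eps e 1) (iota 1 K).

Definition Prob (R : fieldType) (n : nat) (A : pred (n.-tuple bool)) : R :=
  (#|A|%:R) / (2 ^+ n).

Arguments Kidx {R} n v.
Arguments Ttime {R n} v e.

(* Before time K the walk cannot stop, since |X_t| <= M_t <= 1 - v_(t+1). At time K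
   it stops exactly when eps_1 = ... = eps_K, for then |X_K| = M_K > 1 - v_(K+1).
   Otherwise both signs occur among the first K steps, so the smallest of v_1..v_K,
   namely v_K, is counted once with each sign and |X_K| <= M_K - 2 v_K <= 1 - 2 v_K
   (using M_(K-1) <= 1 - v_K); as v is nonincreasing after K, the walk then stays
   inside for one more step, and for two if K <= n - 4. The probability is that of
   K - 1 fair coins all agreeing with the first one. *)

From HB Require Import structures.
From mathcomp Require Import all_boot all_order all_algebra.
From mathcomp Require Import ring lra zify.
Set Implicit Arguments.
Unset Strict Implicit.
Unset Printing Implicit Defensive.
Import Order.TTheory GRing.Theory Num.Theory.
Local Open Scope ring_scope.

(* [minn] has no unit on [nat], but an associative and commutative law is all
   [big_rem_AC] needs. *)
HB.instance Definition _ := SemiGroup.isComLaw.Build nat minn minnA minnC.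

Section StopTime.
Variables (n : nat) (P : pred nat).

Let stop_time_seq : stop_time n P =
  \big[minn/(n - 1)%N]_(t <- index_iota 1 n | (t \in index_iota 1 n) && P t) t.
Proof. by rewrite /stop_time big_seq_cond. Qed.

Lemma stop_time_le t : (1 <= t < n)%N -> P t -> (stop_time n P <= t)%N.
Proof.
move=> t_in Pt; rewrite /stop_time (big_rem_AC _ _ _ (z := t)) ?mem_index_iota // Pt.
exact: geq_minl.
Qed.

Lemma stop_time_ge m : (m <= n - 1)%N ->
  (forall t, (1 <= t < n)%N -> P t -> (m <= t)%N) -> (m <= stop_time n P)%N.
Proof.
move=> le_m_last lb; rewrite stop_time_seq.
apply: (big_ind (fun t => m <= t)%N) => // [x y mx my | t /andP[]].
  by rewrite leq_min mx.
by rewrite mem_index_iota; apply: lb.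
Qed.

Lemma stop_timeP :
  stop_time n P = (n - 1)%N \/ P (stop_time n P) /\ (1 <= stop_time n P < n)%N.
Proof.
rewrite stop_time_seq.
apply: (big_ind (fun t => t = n - 1 \/ P t /\ 1 <= t < n)%N) => [|x y hx hy|t /andP[]].
- by left.
- by rewrite /minn; case: ifP.
- by rewrite mem_index_iota; right.
Qed.

Lemma stop_time_le_last : (stop_time n P <= n - 1)%N.
Proof. by case: stop_timeP => [-> // | [_]]; lia. Qed.

Lemma stop_time_gt0 : (1 < n)%N -> (0 < stop_time n P)%N.
Proof. by case: stop_timeP => [-> | [_]]; lia. Qed.

Lemma stop_time_hit : (stop_time n P < n - 1)%N -> P (stop_time n P).
Proof. by case: stop_timeP => [-> | []] //; rewrite ltnn. Qed.

End StopTime.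

Lemma ler_sum_nat_term (R : numDomainType) (F : nat -> R) a b k :
  (forall i, (a <= i < b)%N -> 0 <= F i) -> (a <= k < b)%N ->
  F k <= \sum_(a <= i < b) F i.
Proof.
move=> F_ge0 k_in; rewrite (bigD1_seq k) ?mem_index_iota ?iota_uniq //= lerDl.
rewrite big_seq_cond; apply: sumr_ge0 => i /andP[+ _].
by rewrite mem_index_iota; apply: F_ge0.
Qed.

Lemma normr_sgn (R : numDomainType) b : `|sgn R b| = 1.
Proof. by case: b; rewrite /sgn ?normrN normr1. Qed.

Lemma sgn_le1 (R : numDomainType) b : sgn R b <= 1.
Proof. by case: b; rewrite /sgn // (le_trans (lerN10 R)). Qed.

Lemma sgnM (R : nzRingType) b c : sgn R b * sgn R c = sgn R (b == c).
Proof. by case: b; case: c; rewrite /sgn ?mulr1 ?mul1r ?mulrNN ?mulr1. Qed.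

Lemma sgn_negb (R : nzRingType) b : sgn R (~~ b) = - sgn R b.
Proof. by case: b; rewrite /sgn ?opprK. Qed.

Section Walk.
Variables (R : realDomainType) (n : nat) (v : nat -> R) (e : n.-tuple bool).

Lemma XtS t : Xt v e t.+1 = Xt v e t + v t.+1 * sgn R (eps e t.+1).
Proof. by rewrite /Xt big_nat_recr. Qed.

Lemma MtS t : Mt v t.+1 = Mt v t + v t.+1.
Proof. by rewrite /Mt big_nat_recr. Qed.

Variable t : nat.
Hypothesis v_nneg : forall i, (1 <= i <= t)%N -> 0 <= v i.

Lemma Mt_ge0 : 0 <= Mt v t.
Proof. by rewrite /Mt big_nat; apply: sumr_ge0 => i; rewrite ltnS; apply: v_nneg. Qed.

Lemma normr_Xt_le_Mt : `|Xt v e t| <= Mt v t.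
Proof.
apply: le_trans (ler_norm_sum _ _ _) _; apply: ler_sum_nat => i; rewrite ltnS => i_in.
by rewrite normrM normr_sgn mulr1 ger0_norm ?v_nneg.
Qed.

Lemma Xt_first_eq : first_eq t e -> Xt v e t = sgn R (eps e 1) * Mt v t.
Proof.
move=> /allP const; rewrite /Xt /Mt mulr_sumr; apply: eq_big_nat => i i_in.
by rewrite (eqP (const i _)) 1?mulrC // mem_iota add1n.
Qed.

Lemma Mt_sub_Xt_ge b k : (1 <= k <= t)%N -> eps e k != b ->
  2 * v k <= Mt v t - sgn R b * Xt v e t.
Proof.
move=> k_in eps_k.
have -> : Mt v t - sgn R b * Xt v e t =
    \sum_(1 <= i < t.+1) v i * (1 - sgn R b * sgn R (eps e i)).
  by rewrite /Mt /Xt mulr_sumr -sumrB; apply: eq_bigr => i _; rewrite mulrCA mulrBr mulr1.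
have k_in' : (1 <= k < t.+1)%N by rewrite ltnS.
apply: le_trans (ler_sum_nat_term _ k_in') => [|i /andP[i_ge1 i_le]].
  by rewrite /= sgnM eq_sym (negbTE eps_k) /sgn opprK mulrC.
by apply: mulr_ge0; [rewrite v_nneg ?i_ge1 | rewrite subr_ge0 sgnM sgn_le1].
Qed.

Lemma normr_Xt_not_first_eq : (forall i, (1 <= i <= t)%N -> v t <= v i) ->
  ~~ first_eq t e -> `|Xt v e t| <= Mt v t - 2 * v t.
Proof.
move=> vt_min /allPn[j]; rewrite mem_iota add1n ltnS => j_in eps_j.
have one_in : (1 <= 1 <= t)%N by case/andP: j_in => /leq_trans; apply.
have eps_1 : eps e 1 != ~~ eps e 1 by case: (eps e 1).
have := Mt_sub_Xt_ge one_in eps_1; have := Mt_sub_Xt_ge j_in eps_j.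
have := vt_min _ j_in; have := vt_min _ one_in.
rewrite sgn_negb mulNr opprK.
have -> : `|Xt v e t| = `|sgn R (eps e 1) * Xt v e t| by rewrite normrM normr_sgn mul1r.
rewrite ler_norml; move: (sgn R _ * _) (Mt v t) => y M; lra.
Qed.

End Walk.

Lemma first_eqE n K (e : n.-tuple bool) :
  first_eq K e = all (fun i => nth false e i == nth false e 0) (iota 0 K).
Proof. by rewrite /first_eq (iotaDl 1 0) all_map. Qed.

Lemma first_eq_le1 n K (e : n.-tuple bool) : (K <= 1)%N -> first_eq K e.
Proof. by rewrite /first_eq; case: K => [|[|]] //= _; rewrite eqxx. Qed.

Lemma first_eq_prefix n K (e : n.-tuple bool) b : (0 < K)%N ->
  first_eq K e && (nth false e 0 == b) = all (fun i => nth false e i == b) (iota 0 K).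
Proof.
rewrite first_eqE; case: K => // K _ /=; rewrite eqxx /=.
by case: eqP => [<- | _]; rewrite ?andbT ?andbF.
Qed.

Lemma card_ord_ltn n K : (K <= n)%N -> #|[pred i : 'I_n | (i < K)%N]| = K.
Proof.
move=> le_Kn; rewrite cardE /enum_mem size_filter -enumT.
rewrite -(count_map val (fun i => i < K)%N) val_enum_ord -size_filter.
by rewrite (filter_iota_ltn 0) ?size_iota.
Qed.

Lemma card_prefix_eq n K b : (K <= n)%N ->
  #|[pred e : n.-tuple bool | all (fun i => nth false e i == b) (iota 0 K)]| = (2 ^ (n - K))%N.
Proof.
move=> le_Kn; pose A := [pred i : 'I_n | (i < K)%N].
pose f (e : n.-tuple bool) : {ffun 'I_n -> bool} := [ffun i => tnth e i].
pose g (h : {ffun 'I_n -> bool}) : n.-tuple bool := [tuple h i | i < n].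
have fK : cancel f g by move=> e; apply: eq_from_tnth => i; rewrite tnth_mktuple ffunE.
have gK : cancel g f by move=> h; apply/ffunP => i; rewrite ffunE tnth_mktuple.
have card_notA : #|[predC A]| = (n - K)%N.
  by rewrite -(card_ord_ltn le_Kn) -[n in (n - _)%N]card_ord -(cardC A) addKn.
(* Through [f], the event becomes [pffun_on b [predC A] predT]. *)
rewrite -(card_image (can_inj fK)) -card_notA -[2%N]card_bool -(card_pffun_on b).
apply: eq_card => h; rewrite -[h in LHS]gK mem_image ?inE; last exact: can_inj fK.
have nth_gh (i : 'I_n) : nth false (g h) i = h i by rewrite -tnth_nth tnth_mktuple.
apply/allP/familyP => /= [prefix_b i | h_on j].
  rewrite !inE /=; case: (ltnP i K) => //= lt_iK.
  by have := prefix_b i; rewrite mem_iota lt_iK -nth_gh => /(_ isT).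
rewrite mem_iota /= => lt_jK.
have lt_jn : (j < n)%N by exact: leq_trans lt_jK le_Kn.
by have := h_on (Ordinal lt_jn); rewrite !inE /= lt_jK -(nth_gh (Ordinal lt_jn)).
Qed.

Lemma card_first_eq n K : (0 < K <= n)%N ->
  #|(fun e : n.-tuple bool => first_eq K e)| = (2 ^ (n - K)).*2.
Proof.
move=> /andP[K_gt0 le_Kn].
rewrite -(cardID (fun e : n.-tuple bool => nth false e 0)) -addnn.
congr (_ + _)%N;
  [rewrite -(card_prefix_eq true le_Kn) | rewrite -(card_prefix_eq false le_Kn)];
  apply: eq_card => e; rewrite !inE -!topredE /= -first_eq_prefix //.
- by rewrite eqb_id.
- by rewrite eqbF_neg andbC.
Qed.

Lemma Prob_first_eq (R : numFieldType) n K : (0 < K <= n)%N ->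
  Prob R (fun e : n.-tuple bool => first_eq K e) = 2 / 2 ^+ K.
Proof.
move=> K_in; rewrite /Prob card_first_eq // -muln2 natrM natrX.
have [_ le_Kn] := andP K_in.
have two_neq0 : (2 : R) != 0 by rewrite pnatr_eq0.
rewrite -{2}(subnKC le_Kn) exprD; field.
by rewrite !expf_neq0.
Qed.

Section OrderedWeights.
Variables (R : realDomainType) (n : nat) (v : nat -> R).
Hypotheses (ge4_n : (4 <= n)%N) (v1_le_vn : v 1%N <= v n)
  (vn1_le_v1 : v (n - 1)%N <= v 1%N) (v2_le_vn1 : v 2%N <= v (n - 1)%N)
  (v_nonincr : forall i, (2 <= i)%N -> (i < n - 2)%N -> v i.+1 <= v i)
  (vn2_ge0 : 0 <= v (n - 2)%N).

Lemma v_le_mono i j : (2 <= i <= j)%N -> (j <= n - 2)%N -> v j <= v i.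
Proof.
move=> /andP[le2i le_ij] le_jn.
apply: (@Order.NatMonotonyTheory.nonincn_inP _ _ [pred k | 2 <= k <= n - 2]%N v) => //=.
- move=> a b /andP[a2 _] /andP[_ bn] k /andP[ak kb].
  by rewrite inE /= (ltn_trans a2 ak) (leq_trans (ltnW kb) bn).
- by move=> k /andP[k2 _] /andP[_ kn]; apply: v_nonincr.
- by rewrite inE /=; lia.
- by rewrite inE /=; lia.
Qed.

Lemma v_ge0 i : (1 <= i <= n)%N -> 0 <= v i.
Proof.
move=> /andP[ge1_i le_in].
have v2_ge0 : 0 <= v 2%N by apply: le_trans vn2_ge0 (v_le_mono _ _); lia.
have v1_ge0 : 0 <= v 1%N by apply: le_trans v2_ge0 (le_trans v2_le_vn1 vn1_le_v1).
have [lt_i2 | ge2_i] := ltnP i 2; first by have -> : i = 1%N by lia.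
have [le_in2 | gt_in2] := leqP i (n - 2).
  by apply: le_trans vn2_ge0 (v_le_mono _ _); lia.
have [lt_in | ge_in] := ltnP i n.
  have -> : i = (n - 1)%N by lia.
  exact: le_trans v2_ge0 v2_le_vn1.
have -> : i = n by lia.
exact: le_trans v1_ge0 v1_le_vn.
Qed.

Lemma v_le_prefix k i : (k <= n - 2)%N -> (1 <= i <= k)%N -> v k <= v i.
Proof.
move=> le_kn /andP[ge1_i le_ik].
have [lt_i2 | ge2_i] := ltnP i 2; last by apply: v_le_mono; rewrite ?ge2_i.
have -> : i = 1%N by lia.
have [lt_k2 | ge2_k] := ltnP k 2; first by have -> : k = 1%N by lia.
by apply: le_trans (v_le_mono _ _) (le_trans v2_le_vn1 vn1_le_v1); lia.
Qed.

Local Notation K := (Kidx n v).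

Lemma Kidx_gt0 : (0 < K)%N.
Proof. by apply: stop_time_gt0; lia. Qed.

Lemma Kidx_le : (K <= n - 1)%N.
Proof. exact: stop_time_le_last. Qed.

Lemma Mt_le_before_Kidx t : (1 <= t < K)%N -> Mt v t <= 1 - v t.+1.
Proof.
move=> /andP[ge1_t lt_tK]; rewrite leNgt; apply/negP => hit.
have t_in : (1 <= t < n)%N by have := Kidx_le; lia.
have : (K <= t)%N := stop_time_le t_in hit.
by rewrite leqNgt lt_tK.
Qed.

Lemma Mt_Kidx_gt : (K < n - 1)%N -> 1 - v K.+1 < Mt v K.
Proof. exact: stop_time_hit. Qed.

Lemma Mt_Kidx_le1 : (1 < K)%N -> Mt v K <= 1.
Proof.
move=> gt1_K; have K1_in : (1 <= K.-1 < K)%N by lia.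
have -> : Mt v K = Mt v K.-1 + v K by case: K gt1_K => // k _; rewrite MtS.
by have := Mt_le_before_Kidx K1_in; rewrite prednK ?(ltnW gt1_K) // lerBrDr.
Qed.

Variable e : n.-tuple bool.

Lemma Ttime_ge m : (m <= n - 1)%N ->
  (forall i, (K <= i < m)%N -> `|Xt v e i| <= 1 - v i.+1) -> (m <= Ttime v e)%N.
Proof.
move=> le_m_last X_le; apply: stop_time_ge => // i /andP[ge1_i lt_in] hit.
rewrite leqNgt; apply/negP => lt_im; move: hit; apply/negP; rewrite -leNgt.
have [lt_iK | ge_iK] := ltnP i K; last by apply: X_le; rewrite ge_iK.
apply: le_trans (Mt_le_before_Kidx _); last by rewrite ge1_i.
apply: normr_Xt_le_Mt => j /andP[ge1_j le_ji].
by rewrite v_ge0 // ge1_j (leq_trans le_ji (ltnW lt_in)).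
Qed.

Lemma Kidx_le_Ttime : (K <= Ttime v e)%N.
Proof. by apply: Ttime_ge => [|i]; [exact: Kidx_le | lia]. Qed.

Lemma Ttime_first_eq : (K < n - 1)%N -> first_eq K e -> Ttime v e = K.
Proof.
move=> lt_K_last K_eq; apply/eqP; rewrite eqn_leq Kidx_le_Ttime andbT.
apply: stop_time_le; first by have := Kidx_gt0; lia.
rewrite /= Xt_first_eq // normrM normr_sgn mul1r ger0_norm; first exact: Mt_Kidx_gt.
by apply: Mt_ge0 => i /andP[ge1_i le_iK]; rewrite v_ge0 // ge1_i; lia.
Qed.

Lemma Kidx_gt1 : ~~ first_eq K e -> (1 < K)%N.
Proof. by rewrite ltnNge; apply: contra; apply: first_eq_le1. Qed.

Lemma normr_Xt_Kidx : (K <= n - 3)%N -> ~~ first_eq K e -> `|Xt v e K| <= 1 - 2 * v K.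
Proof.
move=> le_K_n3 K_neq; have gt1_K := Kidx_gt1 K_neq.
apply: le_trans (normr_Xt_not_first_eq _ _ K_neq) _.
- by move=> i /andP[ge1_i le_iK]; rewrite v_ge0 // ge1_i; lia.
- by move=> i; apply: v_le_prefix; lia.
- by rewrite lerD2r Mt_Kidx_le1.
Qed.

Lemma Kidx_lt_Ttime : (K <= n - 3)%N -> ~~ first_eq K e -> (K < Ttime v e)%N.
Proof.
move=> le_K_n3 K_neq; apply: Ttime_ge; first lia.
move=> i i_in; have -> : i = K by lia.
have gt1_K := Kidx_gt1 K_neq.
have vK_ge0 : 0 <= v K by apply: v_ge0; lia.
have vKS_le : v K.+1 <= v K by apply: v_le_mono; lia.
by apply: le_trans (normr_Xt_Kidx le_K_n3 K_neq) _; lra.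
Qed.

Lemma Kidx_addn2_le_Ttime : (K <= n - 4)%N -> ~~ first_eq K e -> (K + 2 <= Ttime v e)%N.
Proof.
move=> le_K_n4 K_neq; apply: Ttime_ge; first lia.
have gt1_K := Kidx_gt1 K_neq.
have X_K := normr_Xt_Kidx ltac:(lia) K_neq.
have vK_ge0 : 0 <= v K by apply: v_ge0; lia.
have vKS_le : v K.+1 <= v K by apply: v_le_mono; lia.
have vKSS_le : v K.+2 <= v K.+1 by apply: v_le_mono; lia.
have vKSS_ge0 : 0 <= v K.+2 by apply: v_ge0; lia.
move=> i i_in; have [-> | ->] : i = K \/ i = K.+1 by lia.
  lra.
rewrite XtS; apply: le_trans (ler_normD _ _) _.
rewrite normrM normr_sgn mulr1 ger0_norm; lra.
Qed.

End OrderedWeights.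

Theorem mainTheorem7 (R : realFieldType) (n : nat) (v : nat -> R) :
  (4 <= n)%N ->
  \sum_(1 <= i < n.+1) v i ^+ 2 <= 1 ->
  v 1%N <= v n -> v (n - 1)%N <= v 1%N -> v 2%N <= v (n - 1)%N ->
  (forall i : nat, (2 <= i)%N -> (i < n - 2)%N -> v i.+1 <= v i) ->
  0 <= v (n - 2)%N ->
  ((Kidx n v <= n - 4)%N ->
     (forall e : n.-tuple bool, first_eq (Kidx n v) e -> Ttime v e = Kidx n v) /\
     (forall e : n.-tuple bool, ~~ first_eq (Kidx n v) e -> (Kidx n v + 2 <= Ttime v e)%N) /\
     Prob R (fun e : n.-tuple bool => first_eq (Kidx n v) e) = 2 / 2 ^+ Kidx n v) /\
  (Kidx n v = (n - 3)%N ->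
     Prob R (fun e : n.-tuple bool => Ttime v e == Kidx n v) = 2 / 2 ^+ Kidx n v /\
     (forall e : n.-tuple bool, Ttime v e != Kidx n v -> (Kidx n v + 1 <= Ttime v e)%N)).
Proof.
move=> ge4_n _ v1_le_vn vn1_le_v1 v2_le_vn1 v_nonincr vn2_ge0.
have K_gt0 : (0 < Kidx n v)%N by apply: Kidx_gt0.
split=> [le_K_n4 | eq_K_n3].
  split; first by move=> e; apply: Ttime_first_eq => //; lia.
  split; first by move=> e; apply: Kidx_addn2_le_Ttime.
  by apply: Prob_first_eq; rewrite K_gt0; lia.
have T_eq_K (e : n.-tuple bool) : (Ttime v e == Kidx n v) = first_eq (Kidx n v) e.
  have [K_eq | K_neq] := boolP (first_eq (Kidx n v) e).
    by apply/eqP; apply: Ttime_first_eq => //; lia.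
  by rewrite gtn_eqF // Kidx_lt_Ttime // eq_K_n3.
split.
  rewrite -(@Prob_first_eq _ n); last by rewrite K_gt0; lia.
  by rewrite /Prob; congr (_%:R / _); apply: eq_card => e; rewrite -!topredE /= T_eq_K.
by move=> e; rewrite T_eq_K addn1; apply: Kidx_lt_Ttime; rewrite ?eq_K_n3.
Qed.
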